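(* Let $k\geq 2$ and $\ell\geq 3$ be fixed integers. Let $p\geq\frac{\log n}{\sqrt n}$ and $G\in\mathcal{G}_{k,n,p}$, and let $X=X_0,X_1,\dots$ be a simple random walk on $G$ starting at $w\in V(G)$. Then for all $x\in V(G)$, \[ \mathbb{P}_w[X_2=x]=\begin{cases}\frac1n\pm\mathcal{O}\!\left(\frac{\sqrt{\log n}}{pn^{3/2}}\right)&\text{if }x\neq w,\\[2pt] \frac{1}{pn}\pm\mathcal{O}\!\left(\frac{\sqrt{\log n}}{p^{3/2}n^{3/2}}\right)&\text{if }x=w,\end{cases} \] and \[ \mathbb{P}_w[X_\ell=x]=\frac1n\pm\mathcal{O}\!\left(\frac{\sqrt{\log n}}{pn^{3/2}}\right). \]
   Context: For $p=p(n)$ with $\frac{\log n}{n^{(k-1)/k}}\le p\le 1-\Omega(\frac{\log^4 n}{n})$, $\mathcal{G}_{k,n,p}$ denotes the set of graphs $G$ on $n$ vertices satisfying: (i) $G$ is not bipartite; (ii) $\operatorname{diam}(G)\le k$; (iii) every vertex has degree $d(v)=pn\pm\mathcal{O}(\sqrt{pn\log n})$; (iv) $2|E(G)|=pn^2\pm\mathcal{O}(\sqrt{pn^2\log n})$; (v) $|N(v)\cap N(w)|=p^2n\pm\mathcal{O}(\max\{\sqrt{p^2n\log n},\log n\})$ for all $v\ne w$; (vi) the unit eigenvector $\phi$ of the largest adjacency eigenvalue has entries $\phi_i=\frac1{\sqrt n}\pm\mathcal{O}(\frac{\log^{3/2}n}{\sqrt p\,n\log(pn)})$; (vii) $\lambda_1=(1+o(1))pn$;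 (viii) $\max\{|\lambda_2|,|\lambda_n|\}=\mathcal{O}(\sqrt{pn})$, where $\lambda_1\ge\dots\ge\lambda_n$ are the adjacency eigenvalues. Asymptotic notation is as $n\to\infty$ with constants independent of $n$. $\mathbb{P}_w[\cdot]=\mathbb{P}[\cdot\mid X_0=w]$. *)

From mathcomp Require Import all_boot all_order all_algebra.
From mathcomp Require Import all_classical all_reals all_analysis.
Set Implicit Arguments. Unset Strict Implicit. Unset Printing Implicit Defensive.
Import Order.TTheory GRing.Theory Num.Theory.
Local Open Scope ring_scope.

Section Defs.
Variable R : realType.
Variable n : nat.

Definition simple_graph (e : rel 'I_n) : Prop :=
  (forall u v, e u v = e v u) /\ (forall u, ~~ e u u).

Definition adjmx (e : rel 'I_n) : 'M[R]_n := \matrix_(i, j) (e i j)%:R.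

Definition deg (e : rel 'I_n) (v : 'I_n) : nat := #|[set u | e v u]|.

Definition codeg (e : rel 'I_n) (v w : 'I_n) : nat := #|[set u | e v u & e w u]|.

Definition twice_edges (e : rel 'I_n) : nat := \sum_(v : 'I_n) deg e v.

Definition bipartite (e : rel 'I_n) : Prop :=
  exists f : 'I_n -> bool, forall u v, e u v -> f u != f v.

Definition diam_le (e : rel 'I_n) (k : nat) : Prop :=
  forall u v : 'I_n, exists s : seq 'I_n,
    [/\ (size s <= k)%N, path e u s & last u s = v].

(* s is the list of adjacency eigenvalues (with multiplicity), in
   nonincreasing order: lambda_1 = s`_0 >= ... >= lambda_n = s`_(n-1). *)
Definition adj_spectrum (e : rel 'I_n) (s : seq R) : Prop :=
  sorted (>=%R) s /\ char_poly (adjmx e) = \prod_(a <- s) ('X - a%:P).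

Definition srw_mx (e : rel 'I_n) : 'M[R]_n :=
  \matrix_(i, j) ((e i j)%:R / (deg e i)%:R).

Definition srw_prob (e : rel 'I_n) (t : nat) (w x : 'I_n) : R :=
  (srw_mx e ^+ t) w x.

(* Membership in G_{k,n,p}, where C > 0 is the (fixed) constant hidden in all
   the O(.) terms of (iii)-(vi),(viii), and eps is the o(1) function of (vii). *)
Definition inGknp (k : nat) (p C : R) (eps : nat -> R) (e : rel 'I_n) : Prop :=
  let nR := n%:R : R in
  [/\ ~ bipartite e /\ diam_le e k,
      (forall v, `|(deg e v)%:R - p * nR| <= C * Num.sqrt (p * nR * ln nR)),
      `|(twice_edges e)%:R - p * nR ^+ 2| <= C * Num.sqrt (p * nR ^+ 2 * ln nR),
      (forall v w, v != w ->
         `|(codeg e v w)%:R - p ^+ 2 * nR| <=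
            C * Num.max (Num.sqrt (p ^+ 2 * nR * ln nR)) (ln nR)) &
      exists s : seq R, adj_spectrum e s /\
      [/\ (exists phi : 'cV[R]_n,
             [/\ adjmx e *m phi = s`_0 *: phi,
                 \sum_i phi i 0 ^+ 2 = 1 &
                 forall i, `|phi i 0 - (Num.sqrt nR)^-1| <=
                   C * (ln nR `^ (3/2)) / (Num.sqrt p * nR * ln (p * nR))]),
          `|s`_0 - p * nR| <= eps n * (p * nR) &
          Num.max `|s`_1| `|s`_n.-1| <= C * Num.sqrt (p * nR)]].

End Defs.

(* Every
   degree is pn (1 +- r) with r = O(sqrt(log n / pn)), hence every 1/d(u) is
   1/pn (1 +- 2r), and the two-step probability
     P^2(w,x) = 1/d(w) * sum_{u in N(w) /\ N(x)} 1/d(u)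
   equals |N(w) /\ N(x)| / (pn)^2 up to a relative error O(r).  With the
   codegree p^2 n (1 +- O(rho)), rho = sqrt(log n) / (p sqrt n), this is
   1/n (1 +- O(rho)) for x <> w, and 1/pn (1 +- 2r) for x = w.  For l >= 3,
   P^l(w,x) averages the P^2(y,x) with the weights P^(l-2)(w,y): the terms
   y <> x are 1/n (1 +- O(rho)), and the term y = x has weight
   P^(l-2)(w,x) <= max_y P(y,x) <= 2/pn, so it only adds O(1/(pn)^2), which is
   O(rho/n) because p sqrt n >= log n. *)

From mathcomp Require Import all_boot all_order all_algebra.
From mathcomp Require Import all_classical all_reals all_analysis.
From mathcomp Require Import ring lra.
Import Order.TTheory GRing.Theory Num.Theory numFieldNormedType.Exports.
Set Implicit Arguments.
Unset Strict Implicit.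
Unset Printing Implicit Defensive.
Local Open Scope ring_scope.

Section RelativeApproximation.
Variable R : realFieldType.
Implicit Types r x y z : R.

Definition rel_approx r x y := `|x - y| <= r * y.

Lemma rel_approx_le_mul r x y : rel_approx r x y -> x <= (1 + r) * y.
Proof. by move=> /ler_normlP[_ h]; lra. Qed.

Lemma rel_approx_ge_mul r x y : rel_approx r x y -> (1 - r) * y <= x.
Proof. by move=> /ler_normlP[h _]; lra. Qed.

Lemma rel_approx_gt0 r x y : r < 1 -> 0 < y -> rel_approx r x y -> 0 < x.
Proof.
move=> r_lt1 y_gt0 /rel_approx_ge_mul; apply: lt_le_trans.
by rewrite mulr_gt0 // subr_gt0.
Qed.

Lemma rel_approx_weaken r1 r2 x y :
  0 <= y -> r1 <= r2 -> rel_approx r1 x y -> rel_approx r2 x y.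
Proof. by move=> y0 r12 /le_trans; apply; rewrite ler_wpM2r. Qed.

Lemma rel_approxMl c r x y : 0 <= c -> rel_approx r x y -> rel_approx r (c * x) (c * y).
Proof.
move=> c0 h; rewrite /rel_approx -mulrBr normrM ger0_norm // mulrCA.
exact: ler_wpM2l.
Qed.

Lemma rel_approxMr c r x y : 0 <= c -> rel_approx r x y -> rel_approx r (x * c) (y * c).
Proof. by rewrite ![_ * c]mulrC; apply: rel_approxMl. Qed.

Lemma rel_approx_sum (I : finType) (P : pred I) (F G : I -> R) r :
  (forall i, P i -> rel_approx r (F i) (G i)) ->
  rel_approx r (\sum_(i | P i) F i) (\sum_(i | P i) G i).
Proof.
move=> h; rewrite /rel_approx -sumrB mulr_sumr.
by apply: le_trans (ler_norm_sum _ _ _) _; apply: ler_sum.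
Qed.

Lemma rel_approx_trans r1 r2 x y z : 0 <= r1 -> 0 <= z ->
  rel_approx r1 x y -> rel_approx r2 y z -> rel_approx (r1 + r2 + r1 * r2) x z.
Proof.
move=> r1_ge0 z0 hxy hyz; have y_le := rel_approx_le_mul hyz.
rewrite /rel_approx (_ : x - z = (x - y) + (y - z)); last by ring.
apply: le_trans (ler_normD _ _) _.
have : r1 * y <= r1 * ((1 + r2) * z) by exact: ler_wpM2l.
move: hxy hyz; rewrite /rel_approx; nra.
Qed.

Lemma rel_approxV r x y : 0 < y -> r <= 1 / 2 ->
  rel_approx r x y -> rel_approx (2 * r) x^-1 y^-1.
Proof.
move=> y_gt0 r_le h; have x_ge := rel_approx_ge_mul h.
have r_ge0 : 0 <= r by rewrite -(pmulr_lge0 _ y_gt0); apply: le_trans h.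
have x_gt0 : 0 < x by apply: lt_le_trans x_ge; rewrite mulr_gt0 //; lra.
rewrite /rel_approx (_ : x^-1 - y^-1 = (y - x) / (x * y)); last first.
  by field; rewrite !lt0r_neq0.
rewrite normrM distrC gtr0_norm ?invr_gt0 ?mulr_gt0 //.
rewrite ler_pdivrMr ?mulr_gt0 // (le_trans h) //.
rewrite (_ : 2 * r / y * (x * y) = 2 * r * x); last by field; rewrite lt0r_neq0.
have := mulr_ge0 r_ge0 (ltW y_gt0); nra.
Qed.
End RelativeApproximation.

Section StochasticMatrix.
Variables (R : realFieldType) (n : nat).
Implicit Types (A B M : 'M[R]_n) (z E b : R).

Definition stochastic M := (forall i j, 0 <= M i j) /\ (forall i, \sum_j M i j = 1).

Lemma stochastic1 : stochastic 1.
Proof.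
split=> [i j|i]; first by rewrite mxE ler0n.
by rewrite (bigD1 i) //= big1 => [|j /negPf ji]; rewrite mxE ?eqxx ?addr0 // eq_sym ji.
Qed.

Lemma stochasticM A B : stochastic A -> stochastic B -> stochastic (A *m B).
Proof.
move=> [A_ge0 A1] [B_ge0 B1]; split=> [i j|i].
  by rewrite mxE sumr_ge0 // => k _; rewrite mulr_ge0.
under eq_bigr do rewrite mxE; rewrite exchange_big /= -(A1 i).
by apply: eq_bigr => k _; rewrite -mulr_sumr B1 mulr1.
Qed.

Lemma stochasticX M m : stochastic M -> stochastic (M ^+ m).
Proof.
move=> hM; elim: m => [|m IH]; first exact: stochastic1.
by rewrite exprS -mulmxE; apply: stochasticM.
Qed.

Lemma stochastic_mulmx_le A B x b :
  stochastic A -> (forall y, B y x <= b) -> forall w, (A *m B) w x <= b.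
Proof.
move=> [A_ge0 A1] hB w; rewrite mxE -[b]mul1r -(A1 w) mulr_suml.
by apply: ler_sum => y _; rewrite ler_wpM2l.
Qed.

Lemma stochastic_mulmx_dist A B w x z :
  stochastic A -> `|(A *m B) w x - z| <= \sum_y A w y * `|B y x - z|.
Proof.
move=> [A_ge0 A1].
rewrite mxE -[X in _ - X]mul1r -(A1 w) mulr_suml -sumrB.
apply: le_trans (ler_norm_sum _ _ _) _; apply: ler_sum => y _.
by rewrite -mulrBr normrM ger0_norm.
Qed.

Lemma stochastic_mulmx_approx A B w x z E : stochastic A -> 0 <= E ->
  (forall y, y != x -> `|B y x - z| <= E) ->
  `|(A *m B) w x - z| <= E + A w x * `|B x x - z|.
Proof.
move=> hA E_ge0 hB; apply: le_trans (stochastic_mulmx_dist _ w x z hA) _.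
have [A_ge0 A1] := hA.
rewrite (bigD1 x) //= addrC lerD2r -[E]mul1r -(A1 w) mulr_suml.
rewrite [leRHS](bigD1 x) //= -[leLHS]add0r lerD ?mulr_ge0 //.
by apply: ler_sum => y yx; rewrite ler_wpM2l ?hB.
Qed.

Lemma stochastic_exp_approx M l w x z E b : stochastic M -> (2 < l)%N ->
  0 <= z -> 0 <= E -> (forall y, M y x <= b) ->
  (forall y, y != x -> `|(M ^+ 2) y x - z| <= E) ->
  `|(M ^+ l) w x - z| <= E + b * (b + z).
Proof.
move=> hM l_gt2 z_ge0 E_ge0 hb hE.
have Mk_le k y : (M ^+ k.+1) y x <= b.
  by rewrite exprSr -mulmxE; apply: stochastic_mulmx_le (stochasticX _ hM) hb y.
have [Mk_ge0 _] := stochasticX (l - 2) hM.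
rewrite -(subnK (ltnW l_gt2)) exprD -mulmxE.
apply: le_trans (stochastic_mulmx_approx w (stochasticX _ hM) E_ge0 hE) _.
rewrite lerD2l ler_pM ?normr_ge0 //.
  by rewrite -(subnSK l_gt2) Mk_le.
apply: le_trans (ler_normB _ _) _.
have [M2_ge0 _] := stochasticX 2 hM.
by rewrite !ger0_norm // lerD2r Mk_le.
Qed.
End StochasticMatrix.

Section SimpleRandomWalk.
Variables (R : realType) (n : nat) (e : rel 'I_n).

Local Notation P := (srw_mx R e).

Lemma deg_sumE u : (deg e u)%:R = \sum_v (e u v)%:R :> R.
Proof.
rewrite /deg -sum1dep_card natr_sum big_mkcond.
by apply: eq_bigr => v _; case: (e u v).
Qed.

Lemma codeg_sum1 u w : (codeg e u w)%:R = \sum_(v | e u v && e w v) 1 :> R.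
Proof. by rewrite /codeg -sum1dep_card natr_sum. Qed.

Lemma codeg_id u : codeg e u u = deg e u.
Proof. by apply: eq_card => v; rewrite !inE andbb. Qed.

Lemma srw_mx_stochastic : (forall v, 0 < deg e v)%N -> stochastic P.
Proof.
move=> deg_gt0; split=> [u v|u]; first by rewrite mxE divr_ge0.
under eq_bigr do rewrite mxE.
by rewrite -mulr_suml -deg_sumE divff // pnatr_eq0 -lt0n.
Qed.

Lemma srw_mx2E : (forall u v, e u v = e v u) -> forall w x,
  (P ^+ 2) w x = (deg e w)%:R^-1 * \sum_(u | e w u && e x u) (deg e u)%:R^-1.
Proof.
move=> e_sym w x; rewrite expr2 -mulmxE mxE mulr_sumr [RHS]big_mkcond /=.
apply: eq_bigr => u _; rewrite !mxE (e_sym u x).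
by case: (e w u); case: (e x u); rewrite ?mul0r ?mulr0 ?mul1r ?mulr1 // mulrC.
Qed.
End SimpleRandomWalk.

Section WalkOnNearlyRegularGraph.
Variables (R : realType) (n : nat) (e : rel 'I_n) (d r : R).
Hypotheses (e_sym : forall u v, e u v = e v u) (d_gt0 : 0 < d).
Hypotheses (r_ge0 : 0 <= r) (r_le : r <= 1 / 2).
Hypothesis deg_approx : forall v, rel_approx r (deg e v)%:R d.

Local Notation P := (srw_mx R e).

Lemma deg_gt0 v : (0 < deg e v)%N.
Proof.
by rewrite -(ltr0n R) (rel_approx_gt0 _ d_gt0 (deg_approx v)) //; move: r_le; lra.
Qed.

Lemma inv_deg_approx v : rel_approx (2 * r) (deg e v)%:R^-1 d^-1.
Proof. exact: rel_approxV. Qed.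

Lemma srw_mx2_approx w x :
  rel_approx (2 * r) ((P ^+ 2) w x) ((deg e w)%:R^-1 * (codeg e w x)%:R / d).
Proof.
rewrite srw_mx2E // -mulrA codeg_sum1 mulr_suml mul1r.
by apply: rel_approxMl => //; apply: rel_approx_sum => u _; apply: inv_deg_approx.
Qed.

Lemma srw_mx2_diag_approx w : rel_approx (2 * r) ((P ^+ 2) w w) d^-1.
Proof.
have := srw_mx2_approx w w; rewrite codeg_id mulVf ?mul1r //.
by rewrite pnatr_eq0 -lt0n deg_gt0.
Qed.

Lemma srw_mx2_offdiag_approx w x (c rc : R) : 0 <= c -> 0 <= rc ->
  rel_approx rc (codeg e w x)%:R c ->
  rel_approx (6 * r + 4 * rc) ((P ^+ 2) w x) (c / d ^+ 2).
Proof.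
move=> c_ge0 rc_ge0 hc; have dV_ge0 : 0 <= d^-1 by rewrite invr_ge0 ltW.
have hcodeg : rel_approx rc ((deg e w)%:R^-1 * (codeg e w x)%:R) ((deg e w)%:R^-1 * c).
  by apply: rel_approxMl.
have hdeg : rel_approx (2 * r) ((deg e w)%:R^-1 * c) (d^-1 * c).
  by apply: rel_approxMr => //; apply: inv_deg_approx.
have hcd : rel_approx (rc + 2 * r + rc * (2 * r))
    ((deg e w)%:R^-1 * (codeg e w x)%:R / d) (c / d ^+ 2).
  rewrite expr2 invfM [c * _]mulrA [c * _]mulrC; apply: rel_approxMr => //.
  exact: rel_approx_trans rc_ge0 (mulr_ge0 dV_ge0 c_ge0) hcodeg hdeg.
have cd_ge0 : 0 <= c / d ^+ 2 by rewrite divr_ge0 // exprn_ge0 // ltW.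
have := rel_approx_trans (mulr_ge0 (ler0n R 2) r_ge0) cd_ge0 (srw_mx2_approx w x) hcd.
apply: rel_approx_weaken => //.
have h2r : 0 <= 1 - 2 * r by move: r_le; lra.
have := mulr_ge0 r_ge0 h2r; have := mulr_ge0 rc_ge0 h2r.
have := mulr_ge0 (mulr_ge0 r_ge0 rc_ge0) h2r; lra.
Qed.

Lemma srw_mx_le_col y x : P y x <= 2 / d.
Proof.
rewrite mxE; apply: le_trans (_ : (deg e y)%:R^-1 <= _).
  by rewrite ler_piMl ?invr_ge0 ?ler0n // lern1 leq_b1.
apply: le_trans (rel_approx_le_mul (inv_deg_approx y)) _.
by rewrite ler_wpM2r ?invr_ge0 ?(ltW d_gt0) //; move: r_le; lra.
Qed.

Lemma srw_mx_exp_approx l w x (z E : R) : (2 < l)%N -> 0 <= z -> 0 <= E ->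
  (forall y, y != x -> `|(P ^+ 2) y x - z| <= E) ->
  `|(P ^+ l) w x - z| <= E + 2 / d * (2 / d + z).
Proof.
move=> l_gt2 z_ge0 E_ge0.
exact: stochastic_exp_approx (srw_mx_stochastic R deg_gt0) l_gt2 z_ge0 E_ge0
  (srw_mx_le_col ^~ x).
Qed.
End WalkOnNearlyRegularGraph.

Lemma powR3half (R : realType) (x : R) : 0 <= x -> x `^ (3 / 2) = x * Num.sqrt x.
Proof.
move=> x_ge0; rewrite (_ : 3 / 2 = 1 + 2^-1); last by field.
by rewrite powRD ?powRr1 ?powR12_sqrt //; apply/implyP => /eqP; lra.
Qed.

(* The parameters are written as squares, p = a^2, n = s^2 and ln n = u^2, so
   that all the estimates below are polynomial inequalities. *)
Section Scaling.
Variables (R : realFieldType) (a s u : R).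
Hypotheses (a_gt0 : 0 < a) (a_le1 : a <= 1) (s_gt0 : 0 < s) (u_ge1 : 1 <= u).
Hypothesis u_le : u ^+ 2 <= a ^+ 2 * s.

Let rho := u / (a ^+ 2 * s).

Let a2s_gt0 : 0 < a ^+ 2 * s. Proof. by rewrite mulr_gt0 ?exprn_gt0. Qed.
Let u_gt0 : 0 < u. Proof. exact: lt_le_trans ltr01 u_ge1. Qed.

Lemma deg_error_le : u / (a * s) <= rho.
Proof.
rewrite ler_pdivrMr ?mulr_gt0 // mulrAC ler_pdivlMr // ler_pM2l //.
by rewrite ler_pM2r // expr2 ger_pMl.
Qed.

Lemma codeg_error_le : Num.max (a ^+ 2 * s * u) (u ^+ 2) / (a ^+ 4 * s ^+ 2) <= rho.
Proof.
have a4s2E : a ^+ 4 * s ^+ 2 = (a ^+ 2 * s) ^+ 2 by rewrite exprMn -exprM.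
rewrite a4s2E ler_pdivrMr ?exprn_gt0 // /rho expr2 mulrA divfK ?gt_eqF //.
rewrite ge_max mulrC lexx /= expr2 ler_pM2l //.
by apply: le_trans u_le; rewrite expr2 ler_peMl // ltW.
Qed.

Lemma error_mul_le1 : rho * u <= 1.
Proof. by rewrite mulrAC ler_pdivrMr // mul1r -expr2. Qed.

Lemma revisit_term_le :
  2 / (a ^+ 2 * s ^+ 2) * (2 / (a ^+ 2 * s ^+ 2) + (s ^+ 2)^-1) <= 6 * rho / s ^+ 2.
Proof.
set q := a ^+ 2 * s ^+ 2; have q_gt0 : 0 < q by rewrite mulr_gt0 ?exprn_gt0.
have inv_s2_le : (s ^+ 2)^-1 <= q^-1.
  by rewrite lef_pV2 ?posrE ?exprn_gt0 // /q ger_pMl ?exprn_gt0 // exprn_ile1 // ltW.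
have -> : 6 * rho / s ^+ 2 = 6 / q ^+ 2 * (u * (a ^+ 2 * s)).
  by rewrite /rho /q; field; rewrite !gt_eqF.
have u_a2s_ge1 : 1 <= u * (a ^+ 2 * s).
  by apply: le_trans (ler_wpM2l (ltW u_gt0) u_le); rewrite -exprS exprn_ege1.
apply: le_trans (_ : 2 / q * (2 / q + q^-1) <= _).
  by rewrite ler_wpM2l ?lerD2l // divr_ge0 // ltW.
rewrite (_ : 2 / q * (2 / q + q^-1) = 6 / q ^+ 2 * 1); last by field; rewrite gt_eqF.
by rewrite ler_wpM2l // divr_ge0 ?exprn_ge0 // ltW.
Qed.
End Scaling.

Section WalkOnPseudoRandomGraph.
Variables (R : realType) (n : nat) (e : rel 'I_n) (C a s u : R).
Hypothesis e_sym : forall u v, e u v = e v u.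
Hypotheses (a_gt0 : 0 < a) (a_le1 : a <= 1) (s_gt0 : 0 < s) (u_ge1 : 1 <= u).
Hypotheses (u_le : u ^+ 2 <= a ^+ 2 * s) (C_ge0 : 0 <= C) (C_le : 2 * C <= u).
Hypothesis deg_near : forall v, `|(deg e v)%:R - a ^+ 2 * s ^+ 2| <= C * (a * s * u).
Hypothesis codeg_near : forall v w, v != w ->
  `|(codeg e v w)%:R - a ^+ 4 * s ^+ 2| <= C * Num.max (a ^+ 2 * s * u) (u ^+ 2).

Local Notation P := (srw_mx R e).
Let rho := u / (a ^+ 2 * s).
Let r := C * (u / (a * s)).
Let rc := C * (Num.max (a ^+ 2 * s * u) (u ^+ 2) / (a ^+ 4 * s ^+ 2)).

Let d_gt0 : 0 < a ^+ 2 * s ^+ 2. Proof. by rewrite mulr_gt0 ?exprn_gt0. Qed.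
Let u_gt0 : 0 < u. Proof. exact: lt_le_trans ltr01 u_ge1. Qed.
Let r_ge0 : 0 <= r. Proof. by rewrite mulr_ge0 // divr_ge0 ?mulr_ge0 // ltW. Qed.
Let rc_ge0 : 0 <= rc.
Proof.
by rewrite mulr_ge0 // divr_ge0 ?le_max ?sqr_ge0 ?orbT // mulr_ge0 ?exprn_ge0 // ltW.
Qed.
Let r_le : r <= C * rho. Proof. by rewrite ler_wpM2l // deg_error_le. Qed.
Let rc_le : rc <= C * rho. Proof. by rewrite ler_wpM2l // codeg_error_le. Qed.

Let C_rho_le : C * rho <= 1 / 2.
Proof.
have := error_mul_le1 a_gt0 s_gt0 u_le; rewrite -/rho => rho_u_le1.
have rho_ge0 : 0 <= rho by rewrite divr_ge0 ?mulr_ge0 ?exprn_ge0 ?ltW.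
have := ler_wpM2l rho_ge0 C_le; move: rho_u_le1; nra.
Qed.

Let deg_approx v : rel_approx r (deg e v)%:R (a ^+ 2 * s ^+ 2).
Proof.
rewrite /rel_approx /r (_ : C * _ * _ = C * (a * s * u)) //.
by field; rewrite !gt_eqF.
Qed.

Let codeg_approx v w : v != w -> rel_approx rc (codeg e v w)%:R (a ^+ 4 * s ^+ 2).
Proof.
move=> vw; rewrite /rel_approx /rc.
rewrite (_ : C * _ * _ = C * Num.max (a ^+ 2 * s * u) (u ^+ 2)); first exact: codeg_near.
by field; rewrite !gt_eqF.
Qed.

Lemma srw_mx2_offdiag_le w x : x != w ->
  `|(P ^+ 2) w x - (s ^+ 2)^-1| <= 10 * C * rho / s ^+ 2.
Proof.
move=> xw; have r_le_half : r <= 1 / 2 by apply: le_trans r_le C_rho_le.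
have c_ge0 : 0 <= a ^+ 4 * s ^+ 2 by rewrite mulr_ge0 ?exprn_ge0 // ltW.
have wx : w != x by rewrite eq_sym.
have := srw_mx2_offdiag_approx e_sym d_gt0 r_ge0 r_le_half deg_approx c_ge0 rc_ge0
  (codeg_approx wx).
rewrite /rel_approx (_ : _ / _ ^+ 2 = (s ^+ 2)^-1); last first.
  by rewrite exprMn -exprM; field; rewrite !gt_eqF.
move/le_trans; apply.
by rewrite ler_wpM2r ?invr_ge0 ?sqr_ge0 //; move: r_le rc_le; lra.
Qed.

Lemma srw_mx2_diag_le w :
  `|(P ^+ 2) w w - (a ^+ 2 * s ^+ 2)^-1| <= 2 * C * u / (a ^+ 3 * s ^+ 3).
Proof.
have r_le_half : r <= 1 / 2 by apply: le_trans r_le C_rho_le.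
have := srw_mx2_diag_approx e_sym d_gt0 r_le_half deg_approx w.
rewrite /rel_approx (_ : 2 * r * _ = 2 * C * u / (a ^+ 3 * s ^+ 3)) //.
by rewrite /r; field; rewrite !gt_eqF.
Qed.

Lemma srw_mx_exp_le l w x : (2 < l)%N ->
  `|(P ^+ l) w x - (s ^+ 2)^-1| <= (10 * C + 6) * rho / s ^+ 2.
Proof.
move=> l_gt2; have r_le_half : r <= 1 / 2 by apply: le_trans r_le C_rho_le.
have E_ge0 : 0 <= 10 * C * rho / s ^+ 2.
  by rewrite !mulr_ge0 ?invr_ge0 ?sqr_ge0 ?divr_ge0 ?mulr_ge0 ?sqr_ge0 // ltW.
have z_ge0 : 0 <= (s ^+ 2)^-1 by rewrite invr_ge0 sqr_ge0.
have hE y : y != x -> `|(P ^+ 2) y x - (s ^+ 2)^-1| <= 10 * C * rho / s ^+ 2.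
  by move=> yx; apply: srw_mx2_offdiag_le; rewrite eq_sym.
move: (srw_mx_exp_approx d_gt0 r_le_half deg_approx w l_gt2 z_ge0 E_ge0 hE).
move/le_trans; apply.
rewrite (_ : (10 * C + 6) * rho / s ^+ 2 = 10 * C * rho / s ^+ 2 + 6 * rho / s ^+ 2).
  by rewrite lerD2l revisit_term_le.
by ring.
Qed.
End WalkOnPseudoRandomGraph.

Lemma srw_prob_bounds (R : realType) (n : nat) (e : rel 'I_n) (C p L : R) l w x :
  (forall u v, e u v = e v u) -> 0 <= C -> 4 * C ^+ 2 <= L -> 1 <= L ->
  0 < p -> p <= 1 -> L <= p * Num.sqrt n%:R -> (2 < l)%N ->
  (forall v, `|(deg e v)%:R - p * n%:R| <= C * Num.sqrt (p * n%:R * L)) ->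
  (forall v w, v != w -> `|(codeg e v w)%:R - p ^+ 2 * n%:R| <=
     C * Num.max (Num.sqrt (p ^+ 2 * n%:R * L)) L) ->
  [/\ x != w -> `|srw_prob R e 2 w x - n%:R^-1| <=
        (10 * C + 6) * Num.sqrt L / (p * n%:R `^ (3 / 2)),
      x = w -> `|srw_prob R e 2 w x - (p * n%:R)^-1| <=
        (10 * C + 6) * Num.sqrt L / (p `^ (3 / 2) * n%:R `^ (3 / 2)) &
      `|srw_prob R e l w x - n%:R^-1| <=
        (10 * C + 6) * Num.sqrt L / (p * n%:R `^ (3 / 2))].
Proof.
move=> e_sym C_ge0 C_le L_ge1 p_gt0 p_le1 L_le l_gt2 deg_near codeg_near.
have L_ge0 : 0 <= L by apply: le_trans L_ge1.
have p_ge0 := ltW p_gt0.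
set a := Num.sqrt p; set s := Num.sqrt (n%:R : R); set u := Num.sqrt L.
have pE : p = a ^+ 2 by rewrite sqr_sqrtr // ltW.
have nE : n%:R = s ^+ 2 by rewrite sqr_sqrtr.
have LE : L = u ^+ 2 by rewrite sqr_sqrtr.
have a_gt0 : 0 < a by rewrite sqrtr_gt0.
have a_le1 : a <= 1 by rewrite -sqrtr1 ler_sqrt.
have u_ge1 : 1 <= u by rewrite -sqrtr1 ler_sqrt.
have s_gt0 : 0 < s.
  by rewrite -(pmulr_rgt0 _ p_gt0) (lt_le_trans _ L_le) // (lt_le_trans ltr01).
have u_le : u ^+ 2 <= a ^+ 2 * s by rewrite -LE -pE.
have C_le2 : 2 * C <= u.
  by rewrite -ler_sqr ?nnegrE ?mulr_ge0 ?sqrtr_ge0 // -LE exprMn; lra.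
have sqrt_pnL : Num.sqrt (p * n%:R * L) = a * s * u by rewrite !sqrtrM ?mulr_ge0.
have sqrt_p2nL : Num.sqrt (p ^+ 2 * n%:R * L) = a ^+ 2 * s * u.
  by rewrite !sqrtrM ?mulr_ge0 // sqrtr_sqr ger0_norm.
have deg_near' v : `|(deg e v)%:R - a ^+ 2 * s ^+ 2| <= C * (a * s * u).
  by have := deg_near v; rewrite sqrt_pnL pE nE.
have codeg_near' v w' : v != w' ->
    `|(codeg e v w')%:R - a ^+ 4 * s ^+ 2| <= C * Num.max (a ^+ 2 * s * u) (u ^+ 2).
  by move=> /codeg_near; rewrite sqrt_p2nL LE pE nE -exprM.
have T_E : (10 * C + 6) * (u / (a ^+ 2 * s)) / s ^+ 2 =
    (10 * C + 6) * u / (a ^+ 2 * (s ^+ 2 * s)).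
  by field; rewrite !gt_eqF.
rewrite /srw_prob !powR3half // -/a -/s pE nE -T_E.
have offdiag := srw_mx2_offdiag_le e_sym a_gt0 a_le1 s_gt0 u_ge1 u_le C_ge0 C_le2
  deg_near' codeg_near'.
have diag := srw_mx2_diag_le e_sym a_gt0 a_le1 s_gt0 u_ge1 u_le C_ge0 C_le2 deg_near'.
split.
- move=> /offdiag /le_trans; apply; rewrite ler_pM2r ?invr_gt0 ?exprn_gt0 //.
  by rewrite ler_pM2r ?divr_gt0 ?mulr_gt0 ?exprn_gt0 //; lra.
- move=> ->; apply: le_trans (diag w) _.
  rewrite -!exprSr ler_pM2r ?invr_gt0 ?mulr_gt0 ?exprn_gt0 // ler_pM2r //; lra.
- exact: srw_mx_exp_le.
Qed.

Lemma eventually_ln_ge (R : realType) (b : R) :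
  exists N, forall n, (N <= n)%N -> (0 < n)%N /\ b <= ln (n%:R : R).
Proof.
exists (Num.truncn (expR b)).+1 => n N_le; split; first exact: leq_trans N_le.
have expR_lt : expR b < n%:R by apply: lt_le_trans (truncnS_gt _) _; rewrite ler_nat.
by rewrite -[b]expRK ler_ln ?posrE ?expR_gt0 ?(lt_trans (expR_gt0 b)) // ltW.
Qed.

Lemma density_bounds (R : realType) (n L p c : R) : 0 < n -> 1 <= L -> 0 <= c ->
  L / Num.sqrt n <= p -> p <= 1 - c * (L ^+ 4 / n) ->
  [/\ 0 < p, p <= 1 & L <= p * Num.sqrt n].
Proof.
move=> n_gt0 L_ge1 c_ge0 p_ge p_le; have L_gt0 : 0 < L by apply: lt_le_trans L_ge1.
have sqrt_n_gt0 : 0 < Num.sqrt n by rewrite sqrtr_gt0.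
split; first by apply: lt_le_trans p_ge; rewrite divr_gt0.
  by apply: le_trans p_le _; rewrite gerBl mulr_ge0 // divr_ge0 ?exprn_ge0 // ltW.
by rewrite -ler_pdivrMr.
Qed.

Local Open Scope classical_set_scope.

Theorem lemma6p4 (R : realType) (k l : nat) (C : R) (eps : nat -> R)
    (p : nat -> R) :
  (2 <= k)%N -> (3 <= l)%N -> 0 < C ->
  eps @ \oo --> (0 : R) ->
  (* standing range of p = p(n) *)
  (exists c : R, 0 < c /\ exists N0 : nat, forall n : nat, (N0 <= n)%N ->
     ln (n%:R : R) / (n%:R `^ ((k%:R - 1) / k%:R)) <= p n /\
     p n <= 1 - c * (ln (n%:R : R) ^+ 4 / n%:R)) ->
  (* p >= log n / sqrt n *)
  (exists N1 : nat, forall n : nat, (N1 <= n)%N ->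
     ln (n%:R : R) / Num.sqrt (n%:R) <= p n) ->
  exists C' : R, 0 < C' /\ exists N : nat, forall n : nat, (N <= n)%N ->
    forall e : rel 'I_n, simple_graph e -> inGknp k (p n) C eps e ->
    forall w x : 'I_n,
      [/\ (x != w -> `|srw_prob R e 2 w x - (n%:R)^-1| <=
             C' * Num.sqrt (ln (n%:R : R)) / (p n * n%:R `^ (3/2))),
          (x = w -> `|srw_prob R e 2 w x - (p n * n%:R)^-1| <=
             C' * Num.sqrt (ln (n%:R : R)) / ((p n) `^ (3/2) * n%:R `^ (3/2))) &
          `|srw_prob R e l w x - (n%:R)^-1| <=
             C' * Num.sqrt (ln (n%:R : R)) / (p n * n%:R `^ (3/2))].
Proof.
move=> _ l_ge3 C_gt0 _ [c [c_gt0 [N0 p_le]]] [N1 p_ge].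
exists (10 * C + 6); split; first lra.
have [N2 ln_ge] := eventually_ln_ge (1 + 4 * C ^+ 2).
exists (maxn N0 (maxn N1 N2)) => n; rewrite !geq_max.
move=> /and3P[/p_le[_ p_le'] /p_ge p_ge' /ln_ge[n_gt0 L_ge]].
move=> e [e_sym _] [_ deg_near _ codeg_near _] w x.
have C2_ge0 : 0 <= C ^+ 2 := sqr_ge0 C.
have L_ge1 : 1 <= ln (n%:R : R) by apply: le_trans L_ge; lra.
have C_le : 4 * C ^+ 2 <= ln (n%:R : R) by apply: le_trans L_ge; lra.
have n_gt0R : 0 < n%:R :> R by rewrite ltr0n.
have [p_gt0 p_le1 L_le] := density_bounds n_gt0R L_ge1 (ltW c_gt0) p_ge' p_le'.
have [] := @srw_prob_bounds R n e C (p n) _ l w x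
  e_sym (ltW C_gt0) C_le L_ge1 p_gt0 p_le1 L_le l_ge3 deg_near codeg_near.
by rewrite -!mulrA.
Qed.
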